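(* For every $n\in\mathbb{N}$ and every $m\in\{0,1,\dots,n\}$, \[ \sum_{j=0}^{n}\sum_{i=0}^{j}\frac{\binom{2n+2}{i}}{\binom{2n-m}{j}}=2^{m-1}(2n+1-m)\left(H_n+\frac{2^{2n+1}}{(n+1)\binom{2n+1}{n+1}}+\sum_{k=1}^{m}\frac{1}{2^{k-1}k}\left(\frac{\frac{2^{2n+2}k}{2n+2-k}-\binom{2n+2}{n+1}}{2\binom{2n+1-k}{n+1}}+1\right)\right). \]
   Context: $H_n=\sum_{k=1}^{n}\frac1k$ is the $n$-th harmonic number ($H_0=0$). Empty sums are $0$. *)

From HB Require Import structures.
From mathcomp Require Import all_boot all_order all_algebra.
Set Implicit Arguments. Unset Strict Implicit. Unset Printing Implicit Defensive.
Import Order.TTheory GRing.Theory Num.Theory.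
Local Open Scope ring_scope.

Definition harmonic (n : nat) : rat := \sum_(1 <= k < n.+1) (k%:R)^-1.

From HB Require Import structures.
From mathcomp Require Import all_boot all_order all_algebra.
From mathcomp Require Import ring lra zify.
Set Implicit Arguments. Unset Strict Implicit. Unset Printing Implicit Defensive.
Import Order.TTheory GRing.Theory Num.Theory.
Local Open Scope ring_scope.

(* Write S(n, m) for the left-hand side, a sum over j of partial row sums
   binsum (2n+2) (j+1) = sum_{i<=j} C(2n+2, i) divided by C(K, j), K = 2n-m.
   Passing from K to K-1 rescales C(K, j) by the ratio (K-j)/K, and after
   Abel summation the combination S(n, m+1) - 2K/(K+1) S(n, m) telescopes to
   boundary terms at j = 0 and j = n+1; the latter only involve the half-row
   sum binsum (2n+2) (n+1) = (2^(2n+2) - C(2n+2, n+1))/2.  The right-hand side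
   satisfies the same first-order recurrence in m, so everything reduces to
   m = 0, where S(n, 0) = (2n+1)/2 H_n + 4^n / C(2n, n) follows by induction
   on n from a similar telescoping relation between S(n+1, 0) and S(n, 0). *)

Section BinomialRatioSums.
Variable R : realFieldType.
Implicit Types N K M j k n m p : nat.

Lemma natr_bin_neq0 K j : (j <= K)%N -> 'C(K, j)%:R != 0 :> R.
Proof. by move=> hj; rewrite pnatr_eq0 -lt0n bin_gt0. Qed.

Lemma bin_succ_right K j :
  'C(K, j.+1)%:R = (K%:R - j%:R) / j.+1%:R * 'C(K, j)%:R :> R.
Proof.
case: (leqP j K) => hj; last by rewrite !bin_small ?mulr0 // (ltn_trans hj).
have /(congr1 (GRing.natmul (1 : R))) := mul_bin_left K j.
rewrite !natrM natrB // => e.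
by rewrite mulrAC -e mulrAC divff ?mul1r // pnatr_eq0.
Qed.

Lemma bin_succ_left K j : (j <= K)%N ->
  'C(K.+1, j)%:R = K.+1%:R / (K.+1%:R - j%:R) * 'C(K, j)%:R :> R.
Proof.
move=> hj.
have /(congr1 (GRing.natmul (1 : R))) := mul_bin_down K.+1 j.
rewrite !natrM natrB ?(leq_trans hj) // => e.
have hne : K.+1%:R - j%:R != 0 :> R by rewrite -natrB ?pnatr_eq0 //; lia.
by rewrite mulrAC e mulrAC mulfV ?mul1r.
Qed.

Definition binsum N j : R := \sum_(0 <= i < j) 'C(N, i)%:R.

Lemma binsum0 N : binsum N 0 = 0.
Proof. by rewrite /binsum big_geq. Qed.

Lemma binsumS N j : binsum N j.+1 = binsum N j + 'C(N, j)%:R.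
Proof. by rewrite /binsum big_nat_recr. Qed.

Lemma binsum_rowS N j : binsum N.+1 j.+1 = 2 * binsum N j.+1 - 'C(N, j)%:R.
Proof.
elim: j => [|j IH]; first by rewrite !binsumS !binsum0 !bin0; ring.
by rewrite binsumS IH [binsum N j.+2]binsumS binS natrD; ring.
Qed.

Lemma binsum_row N : binsum N N.+1 = 2 ^+ N.
Proof.
elim: N => [|N IH]; first by rewrite binsumS binsum0 bin0 expr0 add0r.
by rewrite binsum_rowS binsumS IH bin_small // exprS; ring.
Qed.

Lemma binsum_half n :
  binsum (2 * n + 2) n.+1 = (2 ^+ (2 * n + 2) - 'C(2 * n + 2, n.+1)%:R) / 2.
Proof.
set N := (2 * n + 2)%N.
have split_row : binsum N N.+1
    = binsum N n.+1 + 'C(N, n.+1)%:R + \sum_(n.+2 <= i < N.+1) 'C(N, i)%:R.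
  rewrite /binsum (@big_cat_nat _ _ _ n.+1) //=; last by rewrite /N; lia.
  by rewrite (@big_ltn _ _ _ n.+1) ?addrA // /N; lia.
have upper_half : \sum_(n.+2 <= i < N.+1) 'C(N, i)%:R = binsum N n.+1.
  rewrite -{1}(add0n n.+2) big_addn (_ : N.+1 - n.+2 = n.+1)%N; last by lia.
  rewrite /binsum big_nat_rev /=; apply: eq_big_nat => i /andP [_ hi].
  by rewrite add0n -bin_sub /N; [congr (_%:R); congr binomial|]; lia.
rewrite upper_half binsum_row in split_row.
by rewrite split_row; field.
Qed.

Definition ratio_sum n m : R :=
  \sum_(0 <= j < n.+1) binsum (2 * n + 2) j.+1 / 'C(2 * n - m, j)%:R.

Definition potential N K j : R :=
  (binsum N j - (K%:R + 1 - j%:R) / (N - K.+1)%:R * 'C(N, j)%:R) / 'C(K, j)%:R.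

Lemma potential0 N K : potential N K 0 = - (K%:R + 1) / (N - K.+1)%:R.
Proof. by rewrite /potential binsum0 !bin0 subr0 divr1 sub0r mulr1 mulNr. Qed.

Lemma ratio_term_telescope N k j : (j <= k)%N -> (k.+2 < N)%N ->
  binsum N j.+1 / 'C(k, j)%:R
    - 2 * k.+1%:R / (k.+1%:R + 1) * (binsum N j.+1 / 'C(k.+1, j)%:R)
  = k.+1%:R / (k.+1%:R + 1) * (potential N k.+1 j.+1 - potential N k.+1 j).
Proof.
move=> hj hN.
rewrite /potential binsumS !bin_succ_right (bin_succ_left hj) natrB; last by lia.
have hjk : j%:R <= k%:R :> R by rewrite ler_nat.
have hkN : k%:R + 3 <= N%:R :> R by rewrite -natrD ler_nat; lia.
have hj0 : 0 <= j%:R :> R := ler0n _ _.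
field; rewrite natr_bin_neq0 //=.
by repeat (apply/andP; split); apply: lt0r_neq0; lra.
Qed.

Lemma ratio_sum_succm n m : (m < n)%N ->
  ratio_sum n m.+1
  = 2 * (2 * n - m)%:R / ((2 * n - m)%:R + 1) * ratio_sum n m
    + (2 * n - m)%:R / ((2 * n - m)%:R + 1)
      * (potential (2 * n + 2) (2 * n - m) n.+1
         - potential (2 * n + 2) (2 * n - m) 0).
Proof.
move=> hmn; rewrite /ratio_sum (_ : 2 * n - m = (2 * n - m.+1).+1)%N; last by lia.
set k := (2 * n - m.+1)%N.
apply/eqP; rewrite addrC -subr_eq mulr_sumr -sumrB mulrBr; apply/eqP.
apply: (@telescope_sumr_eq _ 0 n.+1
  (fun j => k.+1%:R / (k.+1%:R + 1) * potential (2 * n + 2) k.+1 j)) => // j hj.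
by rewrite ratio_term_telescope /k; [ring | lia | lia].
Qed.

Definition base_potential M j : R :=
  4 / ((M%:R + 2) * (M%:R + 1)) * binsum M.+2 j * (M%:R + 1 - j%:R)
    * (j%:R / 2 - (3 * M%:R + 7) / 4) / 'C(M, j)%:R
  + (M%:R + 3) / (M%:R + 3 - j%:R).

Lemma base_potential0 M : base_potential M 0 = 1.
Proof.
rewrite /base_potential binsum0 !mulr0 !mul0r add0r subr0 divff //.
by apply: lt0r_neq0; have := ler0n R M; lra.
Qed.

Lemma base_term_telescope M j : (j < M)%N ->
  binsum M.+4 j.+1 / 'C(M.+2, j)%:R
    - (M%:R + 3) / (M%:R + 1) * (binsum M.+2 j.+1 / 'C(M, j)%:R)
  = base_potential M j.+1 - base_potential M j.
Proof.
move=> hjM; have hj : (j <= M)%N := ltnW hjM.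
rewrite /base_potential (binsum_rowS M.+3) (binsum_rowS M.+2) (binsumS M.+2 j).
rewrite (bin_succ_left (leqW (leqW hj))) (bin_succ_left (leqW hj)) (bin_succ_left hj).
rewrite bin_succ_right -!natr1.
have hr : j%:R + 1 <= M%:R :> R by rewrite natr1 ler_nat.
have hj0 : 0 <= j%:R :> R := ler0n _ _.
field; rewrite natr_bin_neq0 //=.
by repeat (apply/andP; split); apply: lt0r_neq0; lra.
Qed.

Lemma ratio_sum_succn0 n : (0 < n)%N ->
  ratio_sum n.+1 0
  = ((2 * n)%:R + 3) / ((2 * n)%:R + 1) * ratio_sum n 0
    + (base_potential (2 * n) n.+1 - 1)
    + binsum (2 * n).+4 n.+2 / 'C((2 * n).+2, n.+1)%:R.
Proof.
move=> hn; rewrite /ratio_sum !subn0.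
rewrite (_ : 2 * n.+1 + 2 = (2 * n).+4)%N; last by lia.
rewrite (_ : 2 * n.+1 = (2 * n).+2)%N; last by lia.
rewrite (_ : 2 * n + 2 = (2 * n).+2)%N; last by lia.
rewrite big_nat_recr //=; congr (_ + _).
apply/eqP; rewrite addrC -subr_eq mulr_sumr -sumrB; apply/eqP.
rewrite -[in RHS](base_potential0 (2 * n)).
apply: telescope_sumr_eq => // j hj.
by rewrite base_term_telescope //; lia.
Qed.

Lemma bin_center_right n :
  'C(2 * n, n.+1)%:R = n%:R / (n%:R + 1) * 'C(2 * n, n)%:R :> R.
Proof.
have hn : 0 <= n%:R :> R := ler0n _ _.
rewrite bin_succ_right natrM -natr1; field; apply: lt0r_neq0; lra.
Qed.

Lemma bin_center_odd n :
  'C((2 * n).+1, n.+1)%:R = (2 * n%:R + 1) / (n%:R + 1) * 'C(2 * n, n)%:R :> R.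
Proof.
have hn : 0 <= n%:R :> R := ler0n _ _.
rewrite bin_succ_right (@bin_succ_left _ n) ?natrM -?natr1; last by lia.
by field; rewrite !lt0r_neq0 //; lra.
Qed.

Lemma bin_center_even n :
  'C((2 * n).+2, n.+1)%:R = 2 * (2 * n%:R + 1) / (n%:R + 1) * 'C(2 * n, n)%:R :> R.
Proof.
have hn : 0 <= n%:R :> R := ler0n _ _.
rewrite (@bin_succ_left _ n.+1) ?bin_center_odd ?natrM -?natr1; last by lia.
by field; rewrite !lt0r_neq0 //; lra.
Qed.

Local Notation harm n := (\sum_(1 <= k < n.+1) k%:R^-1 : R).

Lemma ratio_sum0_succ p : (0 < p)%N ->
  ratio_sum p 0 = (2 * p%:R + 1) / 2 * harm p + 2 ^+ (2 * p) / 'C(2 * p, p)%:R ->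
  ratio_sum p.+1 0
  = (2 * p.+1%:R + 1) / 2 * harm p.+1 + 2 ^+ (2 * p.+1) / 'C(2 * p.+1, p.+1)%:R.
Proof.
move=> hp IH; rewrite ratio_sum_succn0 // IH /base_potential.
rewrite [in RHS]big_nat_recr //=.
have half_row : binsum (2 * p).+2 p.+1
    = (2 ^+ (2 * p).+2 - 'C((2 * p).+2, p.+1)%:R) / 2.
  by rewrite -[(2 * p).+2]addn2 binsum_half.
have half_next_row : binsum (2 * p).+4 p.+2
    = (2 ^+ (2 * p).+4 - 'C((2 * p).+4, p.+2)%:R) / 2.
  by rewrite (_ : (2 * p).+4 = 2 * p.+1 + 2)%N ?binsum_half //; lia.
have center_next_row : 'C((2 * p).+4, p.+2)%:R = 2 * (2 * p.+1%:R + 1) / (p.+1%:R + 1)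
    * (2 * (2 * p%:R + 1) / (p%:R + 1) * 'C(2 * p, p)%:R) :> R.
  rewrite (_ : (2 * p).+4 = (2 * p.+1).+2)%N ?bin_center_even; last by lia.
  by rewrite (_ : 2 * p.+1 = (2 * p).+2)%N ?bin_center_even //; lia.
rewrite half_row half_next_row center_next_row (_ : 2 * p.+1 = (2 * p).+2)%N; last by lia.
rewrite bin_center_even bin_center_right !exprS -natr1 !natrM.
have hX : 'C(2 * p, p)%:R != 0 :> R by apply: natr_bin_neq0; lia.
have hp1 : 1 <= p%:R :> R by rewrite (ler_nat _ 1).
field; rewrite hX /=.
by repeat (apply/andP; split); apply: lt0r_neq0; lra.
Qed.

Lemma ratio_sum0 n :
  ratio_sum n 0 = (2 * n%:R + 1) / 2 * harm n + 2 ^+ (2 * n) / 'C(2 * n, n)%:R.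
Proof.
elim: n => [|[|n] IH]; last exact: ratio_sum0_succ.
- by rewrite /ratio_sum big_nat1 big_geq // binsumS binsum0 !bin0 expr0; field.
- rewrite /ratio_sum big_nat_recr //= !big_nat1 !binsumS binsum0 !bin0 !bin1.
  by rewrite (_ : 2 * 1 + 2 = 4)%N // (_ : 2 * 1 - 0 = 2)%N //; field.
Qed.

Definition closed_term n k : R :=
  (2 ^+ k.-1 * k%:R)^-1
  * (((2 ^+ (2 * n + 2) * k%:R) / (2 * n + 2 - k)%:R - 'C(2 * n + 2, n.+1)%:R)
     / (2 * 'C(2 * n + 1 - k, n.+1)%:R) + 1).

Definition closed_form n m : R :=
  2 ^+ m / 2 * (2 * n + 1 - m)%:R
  * (harm n + 2 ^+ (2 * n + 1) / (n.+1%:R * 'C(2 * n + 1, n.+1)%:R)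
     + \sum_(1 <= k < m.+1) closed_term n k).

Lemma closed_form0 n : closed_form n 0 = ratio_sum n 0.
Proof.
rewrite ratio_sum0 /closed_form [\sum_(1 <= k < 1) _]big_geq // addr0 subn0 addn1 bin_center_odd.
have hX : 'C(2 * n, n)%:R != 0 :> R by apply: natr_bin_neq0; lia.
have hn : 0 <= n%:R :> R := ler0n _ _.
rewrite -[(2 * n).+1%:R]natr1 -[n.+1%:R]natr1 natrM exprS; field; rewrite hX /=.
by repeat (apply/andP; split); apply: lt0r_neq0; lra.
Qed.

Lemma closed_form_succ n m : (m < n)%N ->
  closed_form n m.+1
  = 2 * (2 * n - m)%:R / ((2 * n - m)%:R + 1) * closed_form n m
    + (2 * n - m)%:R / ((2 * n - m)%:R + 1)
      * (potential (2 * n + 2) (2 * n - m) n.+1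
         - potential (2 * n + 2) (2 * n - m) 0).
Proof.
move=> hmn.
rewrite /closed_form [\sum_(1 <= k < m.+2) _]big_nat_recr //= /closed_term.
rewrite potential0 /potential binsum_half.
rewrite (_ : 2 * n + 1 - m.+1 = 2 * n - m)%N; last by lia.
rewrite (_ : 2 * n + 2 - m.+1 = (2 * n - m).+1)%N; last by lia.
rewrite (_ : 2 * n + 1 - m = (2 * n - m).+1)%N; last by lia.
rewrite (_ : 2 * n + 2 - (2 * n - m).+1 = m.+1)%N; last by lia.
have hX : 'C(2 * n - m, n.+1)%:R != 0 :> R by apply: natr_bin_neq0; lia.
have hmnR : m%:R + 1 <= n%:R :> R by rewrite natr1 ler_nat.
have hm : 0 <= m%:R :> R := ler0n _ _.
rewrite /= -[(2 * n - m).+1%:R]natr1 -[n.+1%:R]natr1 -[m.+1%:R]natr1 exprS.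
rewrite natrB ?natrM; last by lia.
have hC : 'C(2 * n + 1, n.+1)%:R != 0 :> R by apply: natr_bin_neq0; lia.
have h2m : 2 ^+ m != 0 :> R by rewrite expf_neq0 // pnatr_eq0.
field; rewrite hX hC h2m ?andbT /=.
by repeat (apply/andP; split); apply: lt0r_neq0; lra.
Qed.

Lemma ratio_sum_closed n m : (m <= n)%N -> ratio_sum n m = closed_form n m.
Proof.
elim: m => [|m IH] hm; first by rewrite closed_form0.
by rewrite ratio_sum_succm // closed_form_succ // IH // ltnW.
Qed.

End BinomialRatioSums.

Theorem mainTheorem9 (n m : nat) (hm : (m <= n)%N) :
  \sum_(0 <= j < n.+1) \sum_(0 <= i < j.+1)
      ('C(2 * n + 2, i))%:R / ('C(2 * n - m, j))%:R
  = (2%:R ^ (m%:Z - 1) : rat) * ((2 * n + 1 - m)%N)%:R *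
    (harmonic n
     + (2%:R ^+ (2 * n + 1)) / ((n.+1)%:R * ('C(2 * n + 1, n.+1))%:R)
     + \sum_(1 <= k < m.+1)
         ((2%:R ^+ k.-1 * k%:R)^-1 *
          (((2%:R ^+ (2 * n + 2) * k%:R) / ((2 * n + 2 - k)%N)%:R
              - ('C(2 * n + 2, n.+1))%:R)
           / (2%:R * ('C(2 * n + 1 - k, n.+1))%:R)
           + 1))).
Proof.
have -> : 2%:R ^ (m%:Z - 1) = 2 ^+ m / 2 :> rat by rewrite expfzDr ?exprN1.
rewrite -[RHS]/(closed_form rat n m) -ratio_sum_closed //.
by apply: eq_bigr => j _; rewrite /binsum mulr_suml.
Qed.
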